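(* Let $d\ge2$, $j\in[d-1]$, $R$ an abelian group, and let $\mathcal S$ be the support of a $j$-cocycle $f$ (with coefficients in $R$) in a $d$-dimensional simplicial complex $\mathcal G$. For a simplex $K$ let $\mathcal S_K$ denote the set of $j$-simplices of $\mathcal S$ contained in $K$. Then for each $k$ with $j+1\le k\le d$ and each $k$-simplex $K$ of $\mathcal G$: (i) either $\mathcal S_K=\emptyset$, or both $|\mathcal S_K|\ge k-j+1$ and $\bigcup_{\sigma\in\mathcal S_K}\sigma=K$; (ii) if $|\mathcal S_K|=k-j+1$, then $\mathcal S_K$ forms a $j$-flower in $K$.
   Context: A $j$-cochain assigns to each ordered $j$-simplex a value in $R$, changing sign under swapping two vertices; its support is the set of unordered $j$-simplices with nonzero value; it is a $j$-cocycle if $\sum_{i=0}^{j+1}(-1)^if([v_0,\dots,\hat v_i,\dots,v_{j+1}])=0_R$ for every ordered $(j+1)$-simplex $[v_0,\dots,v_{j+1}]$. $i$-simplices are members of size $i+1$; $d$-dimensional means no $(d+1)$-simplices. Given a $k$-simplex $K$ with $j\le k\le d$, a collection $\{P_0,\dots,P_{k-j}\}$ of $j$-simplices forms a $j$-flower in $K$ if $K=\bigcup_iP_i$ and there is a set $C$ with $|C|=j$ contained in every $P_i$. *)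

From mathcomp Require Import all_boot all_algebra.
Set Implicit Arguments. Unset Strict Implicit. Unset Printing Implicit Defensive.
Import GRing.Theory.
Local Open Scope ring_scope.

(* Simplicial complexes on a finite vertex type V, given as a family of vertex
   sets; an i-simplex is a member of size i+1. *)
Definition simplicial_complex (V : finType) (G : {set {set V}}) : Prop :=
  forall K L : {set V}, K \in G -> L \subset K -> L != set0 -> L \in G.

Definition dimension_le (V : finType) (G : {set {set V}}) (d : nat) : Prop :=
  forall K, K \in G -> (#|K| <= d.+1)%N.

Definition ordered_simplex (V : finType) (G : {set {set V}}) (i : nat) (s : seq V) : bool :=
  [&& uniq s, size s == i.+1 & [set x in s] \in G].

Definition swap_seq (V : finType) (s : seq V) (a b : nat) : seq V :=
  match s with
  | [::] => [::]
  | x0 :: _ => set_nth x0 (set_nth x0 s a (nth x0 s b)) b (nth x0 s a)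
  end.

Definition drop_at (V : finType) (s : seq V) (i : nat) : seq V :=
  take i s ++ drop i.+1 s.

Definition cochain (V : finType) (R : zmodType) (G : {set {set V}}) (j : nat)
  (f : seq V -> R) : Prop :=
  forall s a b, ordered_simplex G j s -> (a < b < size s)%N ->
    f (swap_seq s a b) = - f s.

Definition cocycle (V : finType) (R : zmodType) (G : {set {set V}}) (j : nat)
  (f : seq V -> R) : Prop :=
  cochain G j f /\
  forall s, ordered_simplex G j.+1 s ->
    \sum_(i < j.+2) (if odd i then - f (drop_at s i) else f (drop_at s i)) = 0.

Definition cochain_support (V : finType) (R : zmodType) (G : {set {set V}}) (j : nat)
  (f : seq V -> R) : {set {set V}} :=
  [set sigma in G | (#|sigma| == j.+1) &&
     [exists t : (j.+1).-tuple V, uniq t && ([set x in t] == sigma) && (f t != 0)]].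

Definition restrict_to (V : finType) (S : {set {set V}}) (K : {set V}) : {set {set V}} :=
  [set sigma in S | sigma \subset K].

Definition flower (V : finType) (j : nat) (K : {set V}) (P : {set {set V}}) : Prop :=
  [/\ #|P| = (#|K|.-1 - j).+1,
      (forall p, p \in P -> #|p| = j.+1),
      \bigcup_(p in P) p = K &
      exists C : {set V}, #|C| = j /\ forall p, p \in P -> C \subset p].

From mathcomp Require Import all_boot all_algebra zify.
Set Implicit Arguments. Unset Strict Implicit. Unset Printing Implicit Defensive.
Import GRing.Theory.
Local Open Scope ring_scope.

(* If [sigma] lies in the support and [v] is a vertex of [K] outside [sigma],
   the cocycle relation on the cone [v * sigma] shows that some face of it
   through [v] lies in the support too.  Fixing [sigma] in [S_K], every
   [v] in [K \ sigma] thus yields a member [e v] of [S_K] with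
   [v \in e v \subset v |: sigma]; the [e v] are distinct from each other and
   from [sigma], so [|S_K| >= k - j + 1], and they cover [K].  In the extremal
   case [S_K = {sigma} ∪ {e v}], so [e w] is the only member of [S_K] through
   [w]; extending [e v] by [w] therefore yields [e w \subset w |: e v], whence
   the [j]-set [e v :\ v] lies in every member of [S_K]. *)

Lemma subseq_drop_at (V : finType) (s : seq V) (i : nat) :
  subseq (drop_at s i) s.
Proof.
rewrite /drop_at -{3}(cat_take_drop i s) cat_subseq //.
by rewrite -add1n -drop_drop drop_subseq.
Qed.

Lemma size_drop_at (V : finType) (s : seq V) (i : nat) :
  (i < size s)%N -> size (drop_at s i) = (size s).-1.
Proof.
by move=> lt_i_s; rewrite /drop_at size_cat size_take size_drop lt_i_s; lia.
Qed.

Definition extensible_in (V : finType) (K : {set V}) (S : {set {set V}}) :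
    Prop :=
  forall s v, s \in S -> s \subset K -> v \in K -> v \notin s ->
    exists2 t, t \in S & v \in t /\ t \subset v |: s.

Section CocycleSupport.

Variables (V : finType) (R : zmodType) (G : {set {set V}}) (j : nat).
Variable f : seq V -> R.
Hypothesis G_complex : simplicial_complex G.
Hypothesis f_cocycle : cocycle G j f.

Lemma cochain_supportP s :
  reflect (s \in G /\ exists t,
             [/\ uniq t, size t = j.+1, [set x in t] = s & f t != 0])
          (s \in cochain_support G j f).
Proof.
rewrite inE; apply: (iffP and3P).
  move=> [sG _ /existsP[t /andP[/andP[ut /eqP ts] ft]]].
  by split=> //; exists t; rewrite size_tuple.
move=> [sG [t [ut /eqP szt ts ft]]]; split=> //.
  by rewrite -ts cardsE (card_uniqP ut) (eqP szt).
by apply/existsP; exists (Tuple szt); rewrite ut ts eqxx.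
Qed.

Lemma cons_in_complex K v t :
  K \in G -> v \in K -> {subset t <= K} -> [set x in v :: t] \in G.
Proof.
move=> KG vK tK; apply: (G_complex KG).
  by apply/subsetP => x; rewrite inE in_cons => /predU1P[->|/tK].
by apply/set0Pn; exists v; rewrite inE mem_head.
Qed.

(* The face of [v :: t] opposite to [v] is [t]; the cocycle relation on
   [v :: t] forces a second nonzero face, which contains [v]. *)
Lemma cocycle_cone_face t v :
  ordered_simplex G j.+1 (v :: t) -> f t != 0 ->
  exists i : 'I_j.+1, f (v :: drop_at t i) != 0.
Proof.
move=> vt_simplex ft; apply/existsP; apply: contraNT ft.
rewrite negb_exists => /forallP cone_faces0.
have := (proj2 f_cocycle) _ vt_simplex; rewrite big_ord_recl big1 ?addr0.
  by rewrite /drop_at /= drop0 => ->.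
by move=> i _; move/negbNE/eqP: (cone_faces0 i) => /= ->; rewrite oppr0 if_same.
Qed.

Lemma cochain_support_extensible K :
  K \in G -> extensible_in K (cochain_support G j f).
Proof.
move=> KG s v /cochain_supportP[_ [t [ut szt <- ft]]] tK vK.
rewrite inE => vt; have {}tK x : x \in t -> x \in K.
  by move=> xt; apply: (subsetP tK); rewrite inE.
have [|i fi] := cocycle_cone_face (v := v) _ ft.
  by rewrite /ordered_simplex /= vt ut szt eqxx (cons_in_complex KG).
have sub_t := subseq_drop_at t i; set w := drop_at t i in fi sub_t.
exists [set x in v :: w]; last first.
  split; first by rewrite inE mem_head.
  apply/subsetP => x; rewrite !inE => /predU1P[->|/(mem_subseq sub_t) ->].
    by rewrite eqxx.
  by rewrite orbT.
apply/cochain_supportP; split.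
  by apply: (cons_in_complex KG) => // x /(mem_subseq sub_t)/tK.
exists (v :: w); split=> //=.
- by rewrite (subseq_uniq sub_t ut) (contra (fun vw => mem_subseq sub_t vw)).
- by rewrite size_drop_at szt.
Qed.

End CocycleSupport.

Lemma subsetU1_card (T : finType) (x : T) (A B : {set T}) :
  B \subset x |: A -> #|B| = #|A|.+1 -> A \subset B.
Proof.
move=> BxA cardB; suff -> : B = x |: A by apply: subsetUr.
by apply/eqP; rewrite eqEcard BxA cardB cardsU1 -add1n leq_add2r leq_b1.
Qed.

Lemma card_setD1_mem (T : finType) (x : T) (A : {set T}) :
  x \in A -> #|A| = #|A :\ x|.+1.
Proof. by move=> xA; rewrite (cardsD1 x) xA. Qed.

Lemma restrict_to_extensible (V : finType) (K : {set V}) (T : {set {set V}}) :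
  extensible_in K T -> extensible_in K (restrict_to T K).
Proof.
move=> T_ext s v; rewrite inE => /andP[sT _] sK vK vs.
have [t tT [vt tvs]] := T_ext s v sT sK vK vs.
exists t => //; rewrite inE tT (subset_trans tvs) //.
by rewrite subUset sub1set vK.
Qed.

Section ExtensibleFamily.

Variables (V : finType) (j : nat) (K : {set V}) (S : {set {set V}}).
Hypothesis S_card : forall s, s \in S -> #|s| = j.+1.
Hypothesis S_subK : forall s, s \in S -> s \subset K.
Hypothesis S_extensible : extensible_in K S.

Section Base.

Variable base : {set V}.
Hypothesis base_in : base \in S.

Definition ext_of_base v : {set V} :=
  odflt set0 [pick t in S | (v \in t) && (t \subset v |: base)].

Local Notation ext := ext_of_base.

Lemma ext_of_baseP v :
  v \in K :\: base -> [/\ ext v \in S, v \in ext v & ext v \subset v |: base].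
Proof.
rewrite inE => /andP[vb vK]; rewrite /ext; case: pickP.
  by move=> t /andP[tS /andP[vt tvb]].
have [t tS [vt tvb]] := S_extensible base_in (S_subK base_in) vK vb.
by move=> /(_ t); rewrite tS vt tvb.
Qed.

Lemma ext_of_base_outside v w :
  v \in K :\: base -> w \in K :\: base -> w \in ext v -> w = v.
Proof.
move=> vD; rewrite inE => /andP[wb _].
have [_ _ /subsetP ext_v] := ext_of_baseP vD.
by move=> /ext_v; rewrite !inE (negbTE wb) orbF => /eqP.
Qed.

Lemma ext_of_base_inj : {in K :\: base &, injective ext}.
Proof.
move=> v w vD wD ext_vw; apply/esym/(ext_of_base_outside vD wD).
by rewrite ext_vw; case: (ext_of_baseP wD).
Qed.

Lemma ext_of_base_sub : ext @: (K :\: base) \subset S :\ base.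
Proof.
apply/subsetP => _ /imsetP[v vD ->]; have [vS vv _] := ext_of_baseP vD.
rewrite in_setD1 vS andbT; apply: contraTneq vv => ->.
by case/setDP: vD.
Qed.

Lemma card_ext_of_base : #|ext @: (K :\: base)| = (#|K|.-1 - j)%N.
Proof.
rewrite card_in_imset; last exact: ext_of_base_inj.
rewrite cardsD (setIidPr (S_subK base_in)) (S_card base_in).
by rewrite subnS -predn_sub.
Qed.

Lemma extensible_card_ge : ((#|K|.-1 - j).+1 <= #|S|)%N.
Proof.
rewrite (cardsD1 base S) base_in add1n ltnS -card_ext_of_base.
exact: subset_leq_card ext_of_base_sub.
Qed.

Lemma extensible_cover : \bigcup_(s in S) s = K.
Proof.
apply/eqP; rewrite eqEsubset; apply/andP; split; first exact/bigcupsP.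
apply/subsetP => x xK; apply/bigcupP.
have [xb|xb] := boolP (x \in base); first by exists base.
have xD : x \in K :\: base by rewrite inE xb.
by have [xS xx _] := ext_of_baseP xD; exists (ext x).
Qed.

Hypothesis S_card_min : #|S| = (#|K|.-1 - j).+1.

Lemma extensible_min_imset : S :\ base = ext @: (K :\: base).
Proof.
apply/esym/eqP; rewrite eqEcard ext_of_base_sub card_ext_of_base /=.
by move: S_card_min; rewrite (cardsD1 base S) base_in add1n => -[->].
Qed.

Lemma extensible_min_unique r w :
  r \in S -> w \in K :\: base -> w \in r -> r = ext w.
Proof.
move=> rS wD wr; have : r \in S :\ base.
  by rewrite in_setD1 rS andbT; apply: contraTneq wr => ->; case/setDP: wD.
rewrite extensible_min_imset => /imsetP[w' w'D r_ext].
by rewrite r_ext -(ext_of_base_outside w'D wD) // -r_ext.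
Qed.

Lemma extensible_min_core v p :
  v \in K :\: base -> p \in S -> ext v :\ v \subset p.
Proof.
move=> vD pS; have [vS vv ext_v] := ext_of_baseP vD.
have [->|p_base] := eqVneq p base.
  apply/subsetP => x /setD1P[xv /(subsetP ext_v)].
  by rewrite !inE (negbTE xv).
have : p \in S :\ base by rewrite in_setD1 p_base.
rewrite extensible_min_imset => /imsetP[w wD ->].
have [->|wv] := eqVneq w v; first exact: subsetDl.
have [wS _ _] := ext_of_baseP wD; have /setDP[wK _] := wD.
have w_ext_v : w \notin ext v.
  by apply: contra wv => /(ext_of_base_outside vD wD) ->.
have v_ext_w : v \notin ext w.
  by apply: contra wv => /(ext_of_base_outside wD vD) ->.
have [r rS [wr r_sub]] := S_extensible vS (S_subK vS) wK w_ext_v.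
have r_ext_w : r = ext w := extensible_min_unique rS wD wr.
apply: (@subsetU1_card _ w); last first.
  by rewrite (S_card wS) -(S_card vS) (card_setD1_mem vv).
apply/subsetP => x xw; have /(subsetP r_sub) : x \in r by rewrite r_ext_w.
rewrite !inE; case: (x =P w) => //= _ x_ext_v; rewrite x_ext_v andbT.
by apply: contraNneq v_ext_w => <-.
Qed.

End Base.

Lemma extensible_card_cover :
  S = set0 \/ ((#|K|.-1 - j).+1 <= #|S|)%N /\ \bigcup_(s in S) s = K.
Proof.
have [->|/set0Pn[base baseS]] := eqVneq S set0; [by left | right].
by split; [apply: extensible_card_ge baseS | apply: extensible_cover baseS].
Qed.

Lemma extensible_flower : #|S| = (#|K|.-1 - j).+1 -> flower j K S.
Proof.
move=> S_card_min.
have /card_gt0P[base baseS] : (0 < #|S|)%N by rewrite S_card_min.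
split=> //; first exact: extensible_cover baseS.
have S_min := extensible_min_imset baseS S_card_min.
have [D0|[v vD]] := set_0Vmem (K :\: base).
  have /card_gt0P[x xb] : (0 < #|base|)%N by rewrite S_card.
  exists (base :\ x); split.
    by apply: succn_inj; rewrite -card_setD1_mem ?S_card.
  move=> p pS; have : p \notin S :\ base by rewrite S_min D0 imset0 inE.
  by rewrite in_setD1 pS andbT negbK => /eqP ->; apply: subsetDl.
have [vS vv _] := ext_of_baseP baseS vD.
exists (ext_of_base base v :\ v); split.
  by apply: succn_inj; rewrite -card_setD1_mem ?S_card.
by move=> p; apply: (extensible_min_core baseS S_card_min vD).
Qed.

End ExtensibleFamily.

Theorem lemma4p10 (V : finType) (R : zmodType) (G : {set {set V}}) (d j : nat)
  (f : seq V -> R) :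
  simplicial_complex G -> dimension_le G d ->
  (2 <= d)%N -> (1 <= j)%N -> (j <= d - 1)%N ->
  cocycle G j f ->
  forall (k : nat) (K : {set V}), (j.+1 <= k)%N -> (k <= d)%N ->
    K \in G -> #|K| = k.+1 ->
    let SK := restrict_to (cochain_support G j f) K in
    (SK = set0 \/ ((k - j).+1 <= #|SK|)%N /\ \bigcup_(s in SK) s = K) /\
    (#|SK| = (k - j).+1 -> flower j K SK).
Proof.
move=> G_complex _ _ _ _ f_cocycle k K _ _ KG cardK SK.
have SK_card s : s \in SK -> #|s| = j.+1.
  by rewrite !inE => /andP[/and3P[_ /eqP]].
have SK_subK s : s \in SK -> s \subset K by rewrite inE => /andP[].
have SK_extensible : extensible_in K SK.
  exact/restrict_to_extensible/(cochain_support_extensible G_complex f_cocycle).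
have -> : k = #|K|.-1 by rewrite cardK.
split; [exact: extensible_card_cover | exact: extensible_flower].
Qed.
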